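(* Let $d \geq 2$, $N, K \geq 1$ be integers, $\mathbf{y}_1,\ldots,\mathbf{y}_N \in \mathbb{R}^d$ with matrix $\mathbf{Y} = [\mathbf{y}_1,\ldots,\mathbf{y}_N]$, and $\rho_k^{[i]} \geq 0$ with $\sum_{k=1}^K \rho_k^{[i]} = 1$ for each $i$. Put $\mathbf{A}_k = \sum_{i} \rho_k^{[i]}\mathbf{y}_i\mathbf{y}_i^\mathrm{T}$, $\gamma_k = \sum_i \rho_k^{[i]}$, $\lambda_k = $ largest eigenvalue of $\mathbf{A}_k$. For $S \subseteq [K]$ define $\sigma^2(S) = \big(\|\mathbf{Y}\|_\mathrm{F}^2 - \sum_{k\in S}\lambda_k\big)/\big(dN - \sum_{k\in S}\gamma_k\big)$ and $g(S) = \big[dN - \sum_{k\in S}\gamma_k\big]\ln\sigma^2(S) + \sum_{k\in S}\gamma_k\ln(\lambda_k/\gamma_k)$, and assume $\gamma_k>0$, $\lambda_k>0$ for all $k$ and $\sigma^2(S)>0$ for all $S\subseteq[K]$. Let $\mathcal{V} = \{S \subseteq [K] : \sigma^2(S) \leq \lambda_k/\gamma_k \text{ for all } k \in S\}$. Then there exists a minimizer $\hat{S}$ of $g$ over $\mathcal{V}$ that is saturated, i.e. $\hat{S} \in \mathcal{V}$ and $\sigma^2(\hat{S}) > \lambda_j/\gamma_j$ for all $j \in [K]\setminus\hat{S}$.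
   Context: $[K] = \{1,\ldots,K\}$; $\|\cdot\|_\mathrm{F}$ is the Frobenius norm. *)

From HB Require Import structures.
From mathcomp Require Import all_boot all_order all_algebra.
From mathcomp Require Import all_classical all_reals all_analysis.
Set Implicit Arguments. Unset Strict Implicit. Unset Printing Implicit Defensive.
Import Order.TTheory GRing.Theory Num.Theory.
Local Open Scope ring_scope.

Section Defs.
Variable R : realType.

Definition is_largest_eigenvalue (n : nat) (A : 'M[R]_n) (lam : R) : Prop :=
  eigenvalue A lam /\ (forall mu : R, eigenvalue A mu -> mu <= lam).

Definition frob2 (m n : nat) (Y : 'M[R]_(m, n)) : R :=
  \sum_(i < m) \sum_(j < n) Y i j ^+ 2.

Definition Amat (d N K : nat) (Y : 'M[R]_(d, N)) (rho : 'I_N -> 'I_K -> R)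
  (k : 'I_K) : 'M[R]_d :=
  \sum_(i < N) rho i k *: (col i Y *m (col i Y)^T).

Definition gam (N K : nat) (rho : 'I_N -> 'I_K -> R) (k : 'I_K) : R :=
  \sum_(i < N) rho i k.

Definition sigma2 (d N K : nat) (Y : 'M[R]_(d, N)) (rho : 'I_N -> 'I_K -> R)
  (lam : 'I_K -> R) (S : {set 'I_K}) : R :=
  (frob2 Y - \sum_(k in S) lam k) / ((d * N)%:R - \sum_(k in S) gam rho k).

Definition gfun (d N K : nat) (Y : 'M[R]_(d, N)) (rho : 'I_N -> 'I_K -> R)
  (lam : 'I_K -> R) (S : {set 'I_K}) : R :=
  ((d * N)%:R - \sum_(k in S) gam rho k) * ln (sigma2 Y rho lam S)
  + \sum_(k in S) gam rho k * ln (lam k / gam rho k).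

Definition inV (d N K : nat) (Y : 'M[R]_(d, N)) (rho : 'I_N -> 'I_K -> R)
  (lam : 'I_K -> R) (S : {set 'I_K}) : Prop :=
  forall k, k \in S -> sigma2 Y rho lam S <= lam k / gam rho k.

End Defs.

From HB Require Import structures.
From mathcomp Require Import all_boot all_order all_algebra.
From mathcomp Require Import all_classical all_reals all_analysis.
From mathcomp Require Import ring lra.
Set Implicit Arguments. Unset Strict Implicit. Unset Printing Implicit Defensive.
Import Order.TTheory GRing.Theory Num.Theory.
Local Open Scope ring_scope.

(* Write sigma^2(S) = a/b.  Adding to S an index j with sigma^2(S) <= lam_j/gam_j
   subtracts from (a, b) a pair of larger ratio, so sigma^2 does not increase and
   the enlarged set stays in V.  Moreover g(S) = b ln(a/b) + sum_S gam ln(lam/gam)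
   never increases when S grows, by the log-sum inequality (the perspective
   (a, b) |-> b ln(a/b) is superadditive).  Hence a minimiser of g over V of
   maximal cardinality is saturated. *)

Lemma ln_le_subr1 (R : realType) (x : R) : 0 < x -> ln x <= x - 1.
Proof.
move=> x0; have := @le_ln1Dx R (x - 1).
by rewrite addrCA subrr addr0; apply; lra.
Qed.

Lemma mul_ln_div_le_tangent (R : realType) (a b A B : R) :
  0 < a -> 0 < b -> 0 < A -> 0 < B ->
  b * ln (a / b) <= b * ln (A / B) + (a * B / A - b).
Proof.
move=> a0 b0 A0 B0.
have AB0 : 0 < A / B by apply: divr_gt0.
have ratio0 : 0 < (a / b) / (A / B) by do 2 apply: divr_gt0.
have -> : a / b = ((a / b) / (A / B)) * (A / B) by rewrite divfK // gt_eqF.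
rewrite lnM ?posrE // mulrDr addrC lerD2l.
have -> : a * B / A - b = b * ((a / b) / (A / B) - 1) by field; rewrite !gt_eqF.
by rewrite ler_pM2l // ln_le_subr1.
Qed.

Lemma log_sum_le (R : realType) (a1 b1 a2 b2 : R) :
  0 < a1 -> 0 < b1 -> 0 < a2 -> 0 < b2 ->
  b1 * ln (a1 / b1) + b2 * ln (a2 / b2) <= (b1 + b2) * ln ((a1 + a2) / (b1 + b2)).
Proof.
move=> a10 b10 a20 b20.
have A0 : 0 < a1 + a2 by lra.
have B0 : 0 < b1 + b2 by lra.
set L := ln ((a1 + a2) / (b1 + b2)).
have tangents_cancel :
    (a1 * (b1 + b2) / (a1 + a2) - b1) + (a2 * (b1 + b2) / (a1 + a2) - b2) = 0.
  by field; rewrite gt_eqF.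
have -> : (b1 + b2) * L = (b1 * L + (a1 * (b1 + b2) / (a1 + a2) - b1))
                        + (b2 * L + (a2 * (b1 + b2) / (a1 + a2) - b2)).
  by rewrite addrACA tangents_cancel addr0 mulrDl.
by apply: lerD; apply: mul_ln_div_le_tangent.
Qed.

Lemma mediant_subr_le (R : realFieldType) (a b l c : R) :
  0 < c -> 0 < b - c -> a / b <= l / c -> (a - l) / (b - c) <= a / b.
Proof.
move=> c0 bc0; have b0 : 0 < b by lra.
rewrite ler_pdivlMr // mulrAC ler_pdivrMr // => hs.
by rewrite ler_pdivrMr // mulrAC ler_pdivlMr //; nra.
Qed.

Lemma exists_saturated_argmin (T : finType) (disp : Order.disp_t) (O : orderType disp)
    (V : pred {set T}) (g : {set T} -> O) (sat : T -> {set T} -> bool) :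
  V finset.set0 ->
  (forall (S : {set T}) (j : T), j \notin S -> V S -> ~~ sat j S ->
     V (j |: S) && (g (j |: S) <= g S)%O) ->
  exists S : {set T},
    [/\ V S, forall S', V S' -> (g S <= g S')%O & forall j, j \notin S -> sat j S].
Proof.
move=> V0 grow.
have [S0 VS0 minS0] := arg_minP g V0.
pose P S := V S && (g S <= g S0)%O.
have PS0 : P S0 by rewrite /P VS0 lexx.
have [S /andP[VS gS] maxS] := arg_maxnP (fun S : {set T} => #|S|) PS0.
exists S; split=> // [S' VS'|j jS]; first exact: le_trans gS (minS0 S' VS').
apply: contraT => nsat; have /andP[VjS gjS] := grow S j jS VS nsat.
have /maxS : P (j |: S) by rewrite /P VjS (le_trans gjS gS).
by rewrite cardsU1 jS /= ltnn.
Qed.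

Section AddComponent.
Variables (R : realType) (d N K : nat).
Hypotheses (hd : (2 <= d)%N) (hN : (1 <= N)%N).
Variables (Y : 'M[R]_(d, N)) (rho : 'I_N -> 'I_K -> R) (lam : 'I_K -> R).
Hypothesis hrho1 : forall i, \sum_(k < K) rho i k = 1.
Hypothesis hgam_pos : forall k, 0 < gam rho k.
Hypothesis hlam_pos : forall k, 0 < lam k.
Hypothesis hsig_pos : forall S : {set 'I_K}, 0 < sigma2 Y rho lam S.

Let num (S : {set 'I_K}) := frob2 Y - \sum_(k in S) lam k.
Let den (S : {set 'I_K}) := (d * N)%:R - \sum_(k in S) gam rho k.

Lemma sigma2_of_parts (S : {set 'I_K}) : sigma2 Y rho lam S = num S / den S.
Proof. by []. Qed.

Lemma sum_gam : \sum_(k < K) gam rho k = N%:R.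
Proof.
rewrite /gam exchange_big /= (eq_bigr (fun _ => 1)) //.
by rewrite sumr_const card_ord.
Qed.

Lemma den_gt0 (S : {set 'I_K}) : 0 < den S.
Proof.
have gamS_le : \sum_(k in S) gam rho k <= N%:R.
  rewrite -sum_gam [leRHS](bigID (mem S)) /= lerDl.
  by apply: sumr_ge0 => k _; exact: ltW.
have : N%:R < (d * N)%:R :> R.
  by rewrite ltr_nat -[X in (X < _)%N]mul1n ltn_mul2r hN.
rewrite /den; lra.
Qed.

Lemma sigma2_setU1 (S : {set 'I_K}) (j : 'I_K) : j \notin S ->
  sigma2 Y rho lam (j |: S) = (num S - lam j) / (den S - gam rho j).
Proof. by move=> jS; rewrite /sigma2 !big_setU1 //= /num /den; congr (_ / _); ring. Qed.

Lemma den_setU1_gt0 (S : {set 'I_K}) (j : 'I_K) : j \notin S -> 0 < den S - gam rho j.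
Proof. by move=> jS; have := den_gt0 (j |: S); rewrite /den big_setU1 //=; lra. Qed.

Lemma sigma2_setU1_le (S : {set 'I_K}) (j : 'I_K) : j \notin S ->
  sigma2 Y rho lam S <= lam j / gam rho j ->
  sigma2 Y rho lam (j |: S) <= sigma2 Y rho lam S.
Proof.
move=> jS; rewrite sigma2_setU1 // sigma2_of_parts.
exact: mediant_subr_le (hgam_pos j) (den_setU1_gt0 jS).
Qed.

Lemma inV_setU1 (S : {set 'I_K}) (j : 'I_K) : j \notin S -> inV Y rho lam S ->
  sigma2 Y rho lam S <= lam j / gam rho j -> inV Y rho lam (j |: S).
Proof.
move=> jS VS hj k; have le_sig := sigma2_setU1_le jS hj.
rewrite in_setU1 => /orP[/eqP -> | kS]; first exact: le_trans le_sig hj.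
exact: le_trans le_sig (VS k kS).
Qed.

Lemma gfun_setU1_le (S : {set 'I_K}) (j : 'I_K) : j \notin S ->
  gfun Y rho lam (j |: S) <= gfun Y rho lam S.
Proof.
move=> jS; have sig0 := hsig_pos (j |: S).
rewrite sigma2_setU1 // in sig0.
have num0 : 0 < num S - lam j.
  by move: sig0; rewrite ltr_pdivlMr ?den_setU1_gt0 // mul0r.
rewrite /gfun -/(den (j |: S)) sigma2_setU1 // !big_setU1 //= addrA lerD2r.
have -> : den (j |: S) = den S - gam rho j by rewrite /den big_setU1 //=; ring.
have := log_sum_le num0 (den_setU1_gt0 jS) (hlam_pos j) (hgam_pos j).
by rewrite !subrK.
Qed.

End AddComponent.

Theorem lemma4 (R : realType) (d N K : nat)
  (hd : (2 <= d)%N) (hN : (1 <= N)%N) (hK : (1 <= K)%N)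
  (Y : 'M[R]_(d, N)) (rho : 'I_N -> 'I_K -> R) (lam : 'I_K -> R)
  (hrho0 : forall i k, 0 <= rho i k)
  (hrho1 : forall i, \sum_(k < K) rho i k = 1)
  (hlam : forall k, is_largest_eigenvalue (Amat Y rho k) (lam k))
  (hgam_pos : forall k, 0 < gam rho k)
  (hlam_pos : forall k, 0 < lam k)
  (hsig_pos : forall S : {set 'I_K}, 0 < sigma2 Y rho lam S) :
  exists Shat : {set 'I_K},
    [/\ inV Y rho lam Shat,
        (forall S : {set 'I_K}, inV Y rho lam S ->
           gfun Y rho lam Shat <= gfun Y rho lam S)
      & (forall j : 'I_K, j \notin Shat ->
           lam j / gam rho j < sigma2 Y rho lam Shat)].
Proof.
have V0 : `[< inV Y rho lam finset.set0 >] by apply/asboolP => k; rewrite finset.in_set0.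
have grow (S : {set 'I_K}) (j : 'I_K) : j \notin S -> `[< inV Y rho lam S >] ->
    ~~ (lam j / gam rho j < sigma2 Y rho lam S) ->
    `[< inV Y rho lam (j |: S) >] && (gfun Y rho lam (j |: S) <= gfun Y rho lam S).
  move=> jS /asboolP VS; rewrite -leNgt => hj.
  apply/andP; split; first exact/asboolP/(inV_setU1 hd hN hrho1 hgam_pos jS VS hj).
  exact: (gfun_setU1_le hd hN hrho1 hgam_pos hlam_pos hsig_pos jS).
have [Shat [/asboolP VShat minShat satShat]] := exists_saturated_argmin V0 grow.
by exists Shat; split=> // S /asboolP /minShat.
Qed.
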